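(* Let $B, M \in \mathbb{Z}$ with $M(B^2-4M)\neq 0$. Then every equivalence class (for the relation $\sim$ below) of locally soluble forms in $W^B_M(\mathbb{Q})$ contains exactly one element of $\mathcal{F}^B_M$. In particular, every locally soluble $f=ax^4+Bx^2y^2+cy^4\in W^B_M(\mathbb{Q})$ with $a\in\mathbb{Z}$ and $0\le \operatorname{ord}_p a\le 1$ for all primes $p$ has $c\in\mathbb{Z}$.
   Context: For integers $B,M$, let $W^B_M(\mathbb{Q})$ (resp. $W^B_M(\mathbb{Z})$) be the set of binary quartic forms $f(x,y)=ax^4+Bx^2y^2+cy^4$ with $a,c\in\mathbb{Q}$ (resp. $a,c\in\mathbb{Z}$) and $ac=M$. A form $f$ is called locally soluble if for every place $v$ of $\mathbb{Q}$ (including $v=\infty$, $\mathbb{Q}_\infty=\mathbb{R}$) there exist $x,y,z\in\mathbb{Q}_v$ with $(x,y)\neq(0,0)$ and $z^2=f(x,y)$. Two forms $ax^4+Bx^2y^2+cy^4$ and $a'x^4+Bx^2y^2+c'y^4$ in $W^B_M(\mathbb{Q})$ are equivalent ($\sim$) if $a'=s^2a$ and $c'=s^{-2}c$ for some $s\in\mathbb{Q}^*$. Define $\mathcal{F}^B_M=\{ax^4+Bx^2y^2+cy^4\in W^B_M(\mathbb{Z}) : 0\le \operatorname{ord}_p a\le 1 \text{ for all primes } p\}$. *)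

From Stdlib Require Reals.
From HB Require Import structures.
From mathcomp Require Import all_boot all_order all_algebra.
From mathcomp Require Import Rstruct.
Set Implicit Arguments. Unset Strict Implicit. Unset Printing Implicit Defensive.
Import Order.TTheory GRing.Theory Num.Theory.
Local Open Scope ring_scope.

(* A binary quartic form a x^4 + B x^2 y^2 + c y^4 of W^B_M(Q) is encoded by
   the pair (a, c) of rationals (B is fixed); membership in W^B_M(Q) is a*c = M. *)
Definition inW (B M : int) (a c : rat) : Prop := a * c = M%:~R.

Definition form_equiv (a c a' c' : rat) : Prop :=
  exists s : rat, s != 0 /\ a' = s ^+ 2 * a /\ c' = s ^- 2 * c.

Definition real_soluble (B : int) (a c : rat) : Prop :=
  exists x y z : Rdefinitions.R, (x, y) <> (0, 0) /\
    z ^+ 2 = ratr a * x ^+ 4 + B%:~R * x ^+ 2 * y ^+ 2 + ratr c * y ^+ 4.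

(* ---------- the p-adic places ----------
   Z_p is realised as the inverse limit  lim Z/p^n Z : an element is a
   sequence X : nat -> int of representatives with X (n+1) = X n mod p^n,
   and an integral polynomial identity holds in Z_p iff it holds mod p^n at
   every level n (computed on the representatives). *)
Definition zp_elt (p : nat) (X : nat -> int) : Prop :=
  forall n : nat, (X n.+1 = X n %[mod (p ^ n)%N%:Z])%Z.

Definition zp_nonzero (p : nat) (X : nat -> int) : Prop :=
  exists n : nat, ~~ ((p ^ n)%N%:Z %| X n)%Z.

(* Every element of Q_p = Z_p[1/p] is X/p^k with X in Z_p; writing
   x = X/p^k, y = Y/p^k, z = Z/p^k and a = a1/d, c = c1/d with
   d = denq a * denq c, the equation multiplied by the nonzero element
   d p^(4k) of the field Q_p becomes the Z_p-identity
      d p^(2k) Z^2 = a1 X^4 + d B X^2 Y^2 + c1 Y^4 . *)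
Definition padic_soluble (p : nat) (B : int) (a c : rat) : Prop :=
  let d := denq a * denq c in
  let a1 := numq a * denq c in
  let c1 := numq c * denq a in
  exists (k : nat) (X Y Z : nat -> int),
    [/\ zp_elt p X, zp_elt p Y, zp_elt p Z,
        zp_nonzero p X \/ zp_nonzero p Y &
        forall n : nat,
          ((p ^ n)%N%:Z %|
             d * (p ^ (2 * k))%N%:Z * Z n ^+ 2
             - (a1 * X n ^+ 4 + d * B * X n ^+ 2 * Y n ^+ 2 + c1 * Y n ^+ 4))%Z].

Definition locally_soluble (B : int) (a c : rat) : Prop :=
  real_soluble B a c /\ forall p : nat, prime p -> padic_soluble p B a c.

(* The set F^B_M : a, c integers, a*c = M, 0 <= ord_p a <= 1 for all primes p.
   (For a nonzero integer a, ord_p a >= 0 is automatic and ord_p a = logn p |a|.) *)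
Definition inF (B M : int) (a c : int) : Prop :=
  a * c = M /\ forall p : nat, prime p -> (logn p `|a|%N <= 1)%N.

From HB Require Import structures.
From mathcomp Require Import all_boot all_order all_algebra.
From mathcomp Require Import zify ring.
Import Order.TTheory GRing.Theory Num.Theory.
Local Open Scope ring_scope.
Set Implicit Arguments. Unset Strict Implicit.

(* The heart of the proof is a local obstruction (padic_soluble_even): if the
   prime p does not divide M and the form is soluble over Q_p, then ord_p a is
   even.  After clearing denominators the equation is
   L z^2 = A x^4 + Bm x^2 y^2 + C y^4 where ord_p A + ord_p C = 2d, p^d | Bm
   and ord_p A - d, ord_p A - ord_p L are odd.  The two outer terms then have
   distinct valuations, the smaller one dominates the sum, and its parity
   differs from that of ord_p (L z^2); this contradicts a congruence modulo a
   high power of p (quartic_insoluble_mod), which is how the Z_p solution is presented.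

   The theorem then follows by elementary arithmetic: a nonzero integer is
   a0 q^2 with a0 squarefree, which gives a representative (a0, c0) of each
   class, c0 being integral because every prime where a0 has odd order divides
   M (sqfree_cofactor_integral); two squarefree integers in the same square
   class are equal (sqfree_square_class), which gives uniqueness. *)

(* The p-adic valuation of an integer (with vp p 0 = 0). *)
Definition vp (p : nat) (t : int) : nat := logn p `|t|%N.

Lemma vpM p (t u : int) : t != 0 -> u != 0 -> vp p (t * u) = (vp p t + vp p u)%N.
Proof. by move=> ht hu; rewrite /vp abszM lognM // absz_gt0. Qed.

Lemma vpX p (t : int) n : vp p (t ^+ n) = (n * vp p t)%N.
Proof. by rewrite /vp abszX lognX. Qed.

Lemma vp_pow p n : prime p -> vp p (p ^ n)%N%:Z = n.
Proof. by move=> pp; rewrite /vp absz_nat pfactorK. Qed.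

Lemma dvd_vp p k (t : int) : prime p -> t != 0 ->
  ((p ^ k)%N%:Z %| t)%Z = (k <= vp p t)%N.
Proof. by move=> pp ht; rewrite dvdzE absz_nat pfactor_dvdn // absz_gt0. Qed.

Lemma dvd_vp_self p (t : int) : prime p -> ((p ^ vp p t)%N%:Z %| t)%Z.
Proof.
move=> pp; have [->|ht] := eqVneq t 0; first by rewrite dvdz0.
by rewrite dvd_vp.
Qed.

Lemma dvd_pow_le p m n (t : int) : (m <= n)%N ->
  ((p ^ n)%N%:Z %| t)%Z -> ((p ^ m)%N%:Z %| t)%Z.
Proof. by move=> hmn; apply: dvdz_trans; rewrite dvdzE !absz_nat dvdn_exp2l. Qed.

Lemma vp_add_dominant p (u v : int) : prime p -> u != 0 ->
  ((p ^ (vp p u).+1)%N%:Z %| v)%Z -> u + v != 0 /\ vp p (u + v) = vp p u.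
Proof.
move=> pp hu hv.
have not_dvd_u : ~~ ((p ^ (vp p u).+1)%N%:Z %| u)%Z by rewrite dvd_vp // ltnn.
have huv : u + v != 0.
  apply: contraNneq not_dvd_u => e.
  by rewrite -[X in (_ %| X)%Z](addrK v u) e sub0r rpredN.
split=> //; apply/eqP; rewrite eqn_leq.
have hle : ((p ^ vp p u)%N%:Z %| u + v)%Z.
  by rewrite rpredD ?dvd_vp_self // (dvd_pow_le (leqnSn _) hv).
rewrite -[(vp p u <= _)%N]dvd_vp // hle andbT leqNgt -dvd_vp //.
apply: contra not_dvd_u => h.
by rewrite -[X in (_ %| X)%Z](addrK v u) rpredB.
Qed.

Lemma mul_neq0_factors (R : idomainType) (a c m : R) :
  a * c = m -> m != 0 -> a != 0 /\ c != 0.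
Proof. by move=> <-; rewrite mulf_eq0 negb_or => /andP. Qed.

Lemma num_den_id (a c : rat) (M : int) : a * c = M%:~R ->
  numq a * numq c = M * denq a * denq c.
Proof.
move=> h; apply: (@intr_inj rat); rewrite !rmorphM /= -h !numqE; ring.
Qed.

Definition quartic (A Bm C x y : int) : int :=
  A * x ^+ 4 + Bm * x ^+ 2 * y ^+ 2 + C * y ^+ 4.

Lemma quarticC A Bm C x y : quartic A Bm C x y = quartic C Bm A y x.
Proof. by rewrite /quartic; ring. Qed.

Lemma quartic_tail_dvd p (A Bm C x y : int) (d : nat) : prime p ->
  ((p ^ d)%N%:Z %| Bm)%Z -> (2 * d = vp p A + vp p C)%N -> C != 0 -> x != 0 ->
  (y = 0 \/ (y != 0 /\ (vp p A + 4 * vp p x < vp p C + 4 * vp p y)%N)) ->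
  ((p ^ (vp p A + 4 * vp p x).+1)%N%:Z %| Bm * x ^+ 2 * y ^+ 2 + C * y ^+ 4)%Z.
Proof.
move=> pp hB hd hC hx [->|[hy hlt]].
  by rewrite expr0n /= !mulr0 addr0 dvdz0.
have dvd_sq (t : int) : ((p ^ (2 * vp p t))%N%:Z %| t ^+ 2)%Z.
  by rewrite -vpX dvd_vp_self.
apply: rpredD.
  apply: (@dvd_pow_le p _ (d + (2 * vp p x + 2 * vp p y))); first by clear -hd hlt; lia.
  by rewrite expnD PoszM -mulrA dvdz_mul // expnD PoszM dvdz_mul ?dvd_sq.
by rewrite dvd_vp ?mulf_neq0 ?expf_neq0 // vpM ?expf_neq0 // vpX; clear -hlt; lia.
Qed.

(* If A x^4 dominates, the quartic has exact valuation ord_p (A x^4), whose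
   parity differs from that of ord_p (L z^2): no solution modulo p^N. *)
Lemma quartic_dominant_insoluble p (A Bm C L x y z : int) (d N : nat) : prime p ->
  A != 0 -> C != 0 -> L != 0 -> ((p ^ d)%N%:Z %| Bm)%Z ->
  (2 * d = vp p A + vp p C)%N -> odd (vp p A + vp p L) -> x != 0 ->
  (y = 0 \/ (y != 0 /\ (vp p A + 4 * vp p x < vp p C + 4 * vp p y)%N)) ->
  (vp p A + 4 * vp p x < N)%N ->
  ((p ^ N)%N%:Z %| L * z ^+ 2 - quartic A Bm C x y)%Z -> False.
Proof.
move=> pp hA hC hL hB hd hpar hx hy hN hdiv.
set Q := quartic A Bm C x y in hdiv *.
have vAx : vp p (A * x ^+ 4) = (vp p A + 4 * vp p x)%N by rewrite vpM ?expf_neq0 // vpX.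
have [hQ vQ] : Q != 0 /\ vp p Q = vp p (A * x ^+ 4).
  rewrite /Q /quartic -addrA; apply: vp_add_dominant; rewrite ?mulf_neq0 ?expf_neq0 //.
  by rewrite vAx; exact: (quartic_tail_dvd pp hB hd hC hx hy).
have hdivQ : ((p ^ (vp p Q).+1)%N%:Z %| L * z ^+ 2 - Q)%Z.
  by apply: dvd_pow_le hdiv; rewrite vQ vAx.
have [hLz vLz] := vp_add_dominant pp hQ hdivQ.
rewrite addrC subrK in hLz vLz.
have hz : z != 0 by apply: contraNneq hLz => ->; rewrite expr0n mulr0.
move: vLz; rewrite vQ vAx vpM ?expf_neq0 // vpX => e.
by clear -e hpar; lia.
Qed.

(* Under the parity conditions the outer valuations never coincide, so one of
   them dominates; hence no solution with x or y of small valuation mod p^N. *)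
Lemma quartic_insoluble_mod p (A Bm C L x y z : int) (d N : nat) : prime p ->
  A != 0 -> C != 0 -> L != 0 -> ((p ^ d)%N%:Z %| Bm)%Z ->
  (2 * d = vp p A + vp p C)%N -> odd (vp p A + d) -> odd (vp p A + vp p L) ->
  (x != 0 /\ (vp p A + 4 * vp p x < N)%N) \/ (y != 0 /\ (vp p C + 4 * vp p y < N)%N) ->
  ((p ^ N)%N%:Z %| L * z ^+ 2 - quartic A Bm C x y)%Z -> False.
Proof.
move=> pp hA hC hL hB.
wlog [hx hNx] : A C x y hA hC / x != 0 /\ (vp p A + 4 * vp p x < N)%N.
  move=> sym hd hAd hAL [hxN|hyN] hdiv.
    by apply: (sym A C x y hA hC hxN hd hAd hAL _ hdiv); left.
  rewrite quarticC in hdiv; apply: (sym C A y x hC hA hyN _ _ _ _ hdiv); last by left.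
  - by clear -hd; lia.
  - by clear -hd hAd; lia.
  - by clear -hd hAL; lia.
move=> hd hAd hAL _ hdiv.
have [y0|hy] := eqVneq y 0.
  by apply: (quartic_dominant_insoluble pp hA hC hL hB hd hAL hx _ hNx hdiv); left.
have [hlt|hgt|heq] := ltngtP (vp p A + 4 * vp p x) (vp p C + 4 * vp p y).
- by apply: (quartic_dominant_insoluble pp hA hC hL hB hd hAL hx _ hNx hdiv); right.
- rewrite quarticC in hdiv.
  have hd' : (2 * d = vp p C + vp p A)%N by clear -hd; lia.
  have hCL : odd (vp p C + vp p L) by clear -hd hAL; lia.
  apply: (quartic_dominant_insoluble pp hC hA hL hB hd' hCL hy _ _ hdiv).
    by right.
  by clear -hgt hNx; lia.
- by clear -hd hAd heq; lia.
Qed.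

Lemma zp_cong p X : zp_elt p X -> forall n j, ((p ^ n)%N%:Z %| X (n + j)%N - X n)%Z.
Proof.
move=> hX n; elim=> [|j IH]; first by rewrite addn0 subrr dvdz0.
have step : ((p ^ n)%N%:Z %| X (n + j).+1 - X (n + j)%N)%Z.
  by apply: (dvd_pow_le (leq_addr j n)); rewrite -eqz_mod_dvd; apply/eqP; apply: hX.
by rewrite addnS -[X _.+1](subrK (X (n + j)%N)) -addrA rpredD.
Qed.

Lemma zp_nonzero_eventually p X : prime p -> zp_elt p X -> zp_nonzero p X ->
  exists n0, forall N, (n0 <= N)%N -> X N != 0 /\ (vp p (X N) < n0)%N.
Proof.
move=> pp hX [n0 hn0]; exists n0 => N hN.
have not_dvd : ~~ ((p ^ n0)%N%:Z %| X N)%Z.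
  apply: contra hn0 => h.
  have := zp_cong hX n0 (N - n0); rewrite subnKC // => hc.
  by rewrite -[X n0](subKr (X N)) rpredD // rpredN.
have hXN : X N != 0 by apply: contraNneq not_dvd => ->; rewrite dvdz0.
by move: not_dvd; rewrite dvd_vp // -ltnNge.
Qed.

Lemma zp_pair_eventually p X Y : prime p -> zp_elt p X -> zp_elt p Y ->
  zp_nonzero p X \/ zp_nonzero p Y -> exists n0, forall N, (n0 <= N)%N ->
    (X N != 0 /\ (vp p (X N) < n0)%N) \/ (Y N != 0 /\ (vp p (Y N) < n0)%N).
Proof.
move=> pp hX hY [hnz|hnz].
  by have [n0 h] := zp_nonzero_eventually pp hX hnz; exists n0 => N /h; left.
by have [n0 h] := zp_nonzero_eventually pp hY hnz; exists n0 => N /h; right.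
Qed.

Lemma padic_soluble_even p (B M : int) (a c : rat) : prime p ->
  ~~ (p%:Z %| M)%Z -> a * c = M%:~R -> padic_soluble p B a c ->
  ~~ odd (vp p (numq a * denq a)).
Proof.
move=> pp hpM hac [k [X [Y [Z [hX hY _ hnz hsol]]]]]; apply/negP => hodd.
have hM : M != 0 by apply: contraNneq hpM => ->; rewrite dvdz0.
have [hna hnc] : numq a != 0 /\ numq c != 0.
  by rewrite !numq_eq0; apply: mul_neq0_factors hac _; rewrite intr_eq0.
have hda := denq_neq0 a; have hdc := denq_neq0 c.
have vM : vp p M = 0%N.
  by apply/eqP; rewrite -leqn0 leqNgt -dvd_vp // expn1.
have vid : (vp p (numq a) + vp p (numq c) = vp p (denq a) + vp p (denq c))%N.
  by have := congr1 (vp p) (num_den_id hac); rewrite -mulrA !vpM ?mulf_neq0 // vM.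
rewrite vpM // in hodd.
have hpk : (p ^ (2 * k))%N%:Z != 0 by rewrite -absz_gt0 absz_nat expn_gt0 prime_gt0.
(* Apply quartic_insoluble_mod with A = numq a * denq c, C = numq c * denq a,
   L = denq a * denq c * p^(2k) and d = ord_p (denq a * denq c), at a level N
   beyond the valuations of the solution. *)
have hdB : ((p ^ (vp p (denq a) + vp p (denq c)))%N%:Z %| denq a * denq c * B)%Z.
  by apply: dvdz_mulr; rewrite expnD PoszM dvdz_mul ?dvd_vp_self.
have [n0 hn0] := zp_pair_eventually pp hX hY hnz.
set N := (vp p (numq a) + vp p (denq c) + vp p (numq c) + vp p (denq a) + 5 * n0)%N.
have hN := hn0 N (leq_trans (leq_pmull n0 (isT : 0 < 5)%N) (leq_addl _ _)).
have bigN : (vp p (numq a) + vp p (denq c) + 4 * n0 <= N /\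
             vp p (numq c) + vp p (denq a) + 4 * n0 <= N)%N.
  by rewrite /N; clear; split; lia.
clearbody N.
apply: (quartic_insoluble_mod (x := X N) (y := Y N) (z := Z N) pp _ _ _ hdB _ _ _ _
  (hsol N)); rewrite ?mulf_neq0 // ?vpM ?mulf_neq0 // ?vp_pow //.
- by clear -vid; lia.
- by clear -hodd; lia.
- by clear -hodd; lia.
- by case: hN => -[h1 h2]; [left|right]; split=> //; clear -h2 bigN; lia.
Qed.

Lemma odd_order_dvd (B M : int) (a c : rat) (a0 q : int) :
  inW B M a c -> locally_soluble B a c -> q != 0 ->
  numq a * denq a = a0 * q ^+ 2 ->
  forall p, prime p -> vp p a0 = 1%N -> (p%:Z %| M)%Z.
Proof.
move=> hW [_ hloc] hq e p pp va0; apply/negPn/negP => hpM.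
have ha0 : a0 != 0 by apply/eqP => a00; move: va0; rewrite a00 /vp logn0.
have := padic_soluble_even pp hpM hW (hloc p pp).
by rewrite e vpM ?expf_neq0 // vpX va0 oddD oddM.
Qed.

Definition sqfree (a : int) : Prop :=
  forall p : nat, prime p -> (logn p `|a|%N <= 1)%N.

Lemma nat_sqfree_decomposition (n : nat) : (0 < n)%N ->
  exists q r : nat, [/\ (0 < q)%N, n = (q ^ 2 * r)%N & sqfree r].
Proof.
elim/ltn_ind: n => n IH n_gt0.
have [/hasP[p pn lp]|/hasPn small] := boolP (has (fun p => 1 < logn p n)%N (primes n)).
  have pp : prime p by move: pn; rewrite mem_primes => /andP[].
  have p2n : (p ^ 2 %| n)%N by rewrite pfactor_dvdn.
  have p2_gt1 : (1 < p ^ 2)%N by rewrite -(exp1n 2) ltn_exp2r // prime_gt1.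
  have en : n = (n %/ p ^ 2 * p ^ 2)%N by rewrite divnK.
  have n'_gt0 : (0 < n %/ p ^ 2)%N by rewrite divn_gt0 ?expn_gt0 ?prime_gt0 // dvdn_leq.
  have lt_n : (n %/ p ^ 2 < n)%N by rewrite ltn_Pdiv // expn_gt0 prime_gt0.
  have [q [r [q_gt0 en' sqr]]] := IH _ lt_n n'_gt0.
  exists (p * q)%N, r; split=> //; first by rewrite muln_gt0 prime_gt0.
  by rewrite en en'; ring.
exists 1%N, n; split; rewrite ?exp1n ?mul1n // => p pp.
case pn: (p \in primes n); first by rewrite leqNgt small.
suff -> : logn p `|n%:Z|%N = 0%N by [].
by apply/eqP; rewrite absz_nat -leqn0 leqNgt logn_gt0 pn.
Qed.

Lemma sqfree_decomposition (n : int) : n != 0 ->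
  exists (a0 : int) (q : nat), [/\ (0 < q)%N, n = a0 * (q ^ 2)%N%:Z & sqfree a0].
Proof.
move=> n_neq0; have [|q [r [q_gt0 en sqr]]] := @nat_sqfree_decomposition `|n|%N.
  by rewrite absz_gt0.
exists ((-1) ^+ (n < 0)%R * r%:Z), q; split=> //.
  by rewrite {1}(numEsign n) -abszE en PoszM; ring.
by move=> p pp; rewrite abszM abszX /= exp1n mul1n; apply: sqr.
Qed.

Lemma sqfree_square_class (a0 a1 u w : int) : a0 != 0 -> a1 != 0 -> u != 0 -> w != 0 ->
  sqfree a0 -> sqfree a1 -> a1 * u ^+ 2 = w ^+ 2 * a0 -> a0 = a1.
Proof.
move=> ha0 ha1 hu hw sq0 sq1 e.
have same_ord p : prime p -> logn p `|a0|%N = logn p `|a1|%N.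
  move=> pp; have := congr1 (vp p) e; rewrite !vpM ?expf_neq0 // /vp.
  by have := sq0 p pp; have := sq1 p pp; clear; lia.
have same_abs : `|a0|%N = `|a1|%N.
  have [a0_gt0 a1_gt0] : (0 < `|a0|)%N /\ (0 < `|a1|)%N by rewrite !absz_gt0.
  rewrite -(partnT a0_gt0) -(partnT a1_gt0).
  apply: eq_partn_from_log; rewrite ?absz_gt0 // => p _.
  by case: (boolP (prime p)) => [/same_ord //|np]; rewrite [LHS]lognE [RHS]lognE (negbTE np).
have same_sign : sgz a0 = sgz a1.
  have sq_pos (t : int) : t != 0 -> sgz (t ^+ 2) = 1.
    by move=> ht; apply: gtr0_sgz; rewrite exprn_even_gt0.
  by move/(congr1 (@sgz _)): e; rewrite [LHS]sgzM [RHS]sgzM !sq_pos // mulr1 mul1r.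
by rewrite (intEsg a0) (intEsg a1) same_sign same_abs.
Qed.

(* If a0 c = M with a0 squarefree and every prime of odd order in a0 divides
   M, then c is an integer: a prime of the denominator of c would occur in a0
   but not in M. *)
Lemma sqfree_cofactor_integral (M a0 : int) (c : rat) : M != 0 -> sqfree a0 ->
  a0%:~R * c = M%:~R -> (forall p, prime p -> vp p a0 = 1%N -> (p%:Z %| M)%Z) ->
  exists c0 : int, c = c0%:~R.
Proof.
move=> hM sq0 hac hdvd.
have [ha0 hc] : a0 != 0 /\ c != 0.
  by rewrite -(intr_eq0 rat); apply: mul_neq0_factors hac _; rewrite intr_eq0.
have hnc : numq c != 0 by rewrite numq_eq0.
have hid := num_den_id hac; rewrite numq_int denq_int mulr1 in hid.
have no_prime_den p : prime p -> ~~ (p %| `|denq c|)%N.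
  move=> pp; apply/negP => pd.
  have vdc : (1 <= vp p (denq c))%N by rewrite -dvd_vp ?denq_neq0 // expn1 dvdzE.
  have vnc : vp p (numq c) = 0%N.
    apply/eqP; rewrite -leqn0 leqNgt -dvd_vp // expn1 dvdzE; apply/negP => pn.
    have := coprime_num_den c; rewrite /coprime => /eqP g1.
    have : (p %| 1)%N by rewrite -g1 dvdn_gcd pn pd.
    by rewrite dvdn1 => /eqP p1; move: pp; rewrite p1.
  have := congr1 (vp p) hid; rewrite !vpM ?denq_neq0 // vnc addn0.
  have := sq0 p pp; rewrite -/(vp p a0) => le1 e.
  have va0 : vp p a0 = 1%N by clear -le1 e vdc; lia.
  have := hdvd p pp va0; rewrite -[p in (p%:Z %| _)%Z]expn1 dvd_vp //.
  by clear -e va0 vdc; lia.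
have den1 : `|denq c|%N = 1%N.
  apply: contraTeq isT => ne1.
  have gt1 : (1 < `|denq c|)%N by rewrite ltn_neqAle eq_sym ne1 absz_gt0 denq_neq0.
  by have := no_prime_den _ (pdiv_prime gt1); rewrite pdiv_dvd.
apply/intrP; rewrite Qint_def; apply/eqP.
by rewrite -(gtz0_abs (denq_gt0 c)) den1.
Qed.

Lemma sqfree_representative_unique (B M : int) (a c : rat) (a0 c0 a1 c1 : int) :
  M != 0 -> inF B M a0 c0 -> form_equiv a c a0%:~R c0%:~R ->
  inF B M a1 c1 -> form_equiv a c a1%:~R c1%:~R -> a0 = a1 /\ c0 = c1.
Proof.
move=> hM [h0 sq0] [s [hs [ea0 _]]] [h1 sq1] [t [ht [ea1 _]]].
have [ha0 _] := mul_neq0_factors h0 hM; have [ha1 _] := mul_neq0_factors h1 hM.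
pose r := t / s.
have hr : r != 0 by rewrite mulf_neq0 ?invr_eq0.
have er : a1%:~R = r ^+ 2 * a0%:~R :> rat by rewrite ea1 ea0 /r; field.
have e01 : a0 = a1.
  apply: (@sqfree_square_class a0 a1 (denq r) (numq r)); rewrite ?numq_eq0 //.
  by apply: (@intr_inj rat); rewrite !rmorphM /= er numqE; ring.
by split=> //; apply: (mulfI ha0); rewrite h0 e01 h1.
Qed.

(* Existence: rescale a by its square part. *)
Lemma sqfree_representative_exists (B M : int) (a c : rat) : M != 0 ->
  inW B M a c -> locally_soluble B a c ->
  exists a0 c0 : int, inF B M a0 c0 /\ form_equiv a c a0%:~R c0%:~R.
Proof.
move=> hM hW hloc.
have [ha _] : a != 0 /\ c != 0 by apply: mul_neq0_factors hW _; rewrite intr_eq0.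
have hn : numq a * denq a != 0 by rewrite mulf_neq0 ?numq_eq0 ?denq_neq0.
have [a0 [q [q_gt0 en sq0]]] := sqfree_decomposition hn.
pose s := (denq a)%:~R / (q%:R : rat).
have hs : s != 0 by rewrite mulf_neq0 ?invr_eq0 ?intr_eq0 ?pnatr_eq0 -?lt0n ?denq_neq0.
have ea0 : a0%:~R = s ^+ 2 * a.
  have hq : (q%:R : rat) != 0 by rewrite pnatr_eq0 -lt0n.
  apply: (mulIf (expf_neq0 2 hq)); rewrite /s.
  have -> : a0%:~R * q%:R ^+ 2 = (numq a * denq a)%:~R :> rat.
    by rewrite en rmorphM /= -natrX.
  by rewrite rmorphM /= numqE; field.
have hsc : a0%:~R * (s ^- 2 * c) = M%:~R.
  by rewrite ea0 -hW mulrACA mulrV ?mul1r // unitfE expf_neq0.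
have q_neq0 : q%:Z != 0 by rewrite -absz_gt0.
have [c0 ec0] := sqfree_cofactor_integral hM sq0 hsc (odd_order_dvd hW hloc q_neq0 en).
exists a0, c0; split; last by exists s.
split=> //; apply: (@intr_inj rat).
by rewrite rmorphM /= -ec0 hsc.
Qed.

Unset Implicit Arguments. Set Strict Implicit.

Theorem lemma3p1 (B M : int) (hBM : M * (B ^+ 2 - 4 * M) != 0) :
  (forall a c : rat, inW B M a c -> locally_soluble B a c ->
     (exists a0 c0 : int, inF B M a0 c0 /\ form_equiv a c a0%:~R c0%:~R) /\
     (forall a0 c0 a1 c1 : int,
        inF B M a0 c0 -> form_equiv a c a0%:~R c0%:~R ->
        inF B M a1 c1 -> form_equiv a c a1%:~R c1%:~R ->
        a0 = a1 /\ c0 = c1)) /\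
  (forall (a c : rat) (a0 : int), inW B M a c -> locally_soluble B a c ->
     a = a0%:~R -> (forall p : nat, prime p -> (logn p `|a0|%N <= 1)%N) ->
     exists c0 : int, c = c0%:~R).
Proof.
have hM : M != 0 by move: hBM; rewrite mulf_eq0 negb_or => /andP[].
split=> [a c hW hloc | a c a0 hW hloc ea sq0].
  split; first exact: sqfree_representative_exists.
  by move=> a0 c0 a1 c1; apply: sqfree_representative_unique.
have hac : a0%:~R * c = M%:~R by rewrite -ea.
apply: (sqfree_cofactor_integral hM sq0 hac).
apply: (odd_order_dvd hW hloc (q := 1)) => //.
by rewrite ea numq_int denq_int expr1n.
Qed.
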